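(* Let $O_{(4,1)}(x,y,z,w)=x^4z^2w^2+y^4x^2w^2+z^4x^2y^2+w^4y^2z^2-4x^2y^2z^2w^2$, let $0\le a\le1$ and $\alpha,\beta\in\mathbb R$. If $F_1=a\,O_{(4,1)}+xyzw(\alpha x^2z^2+\beta y^2w^2)$ is positive semidefinite on $\mathbb R^4$, then $\alpha=\beta=0$. *)

From Stdlib Require Import Reals.
Open Scope R_scope.

Definition O41 (x y z w : R) : R :=
  x^4 * z^2 * w^2 + y^4 * x^2 * w^2 + z^4 * x^2 * y^2 + w^4 * y^2 * z^2
  - 4 * x^2 * y^2 * z^2 * w^2.

Definition F1 (a alpha beta x y z w : R) : R :=
  a * O41 x y z w + x * y * z * w * (alpha * x^2 * z^2 + beta * y^2 * w^2).

(* On the slice (x, 1, 1, s) with s = ±1 the form reduces to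
   a (x^2 - 1)^2 + s x (alpha x^2 + beta).  At x = 1 this is s (alpha + beta),
   so beta = -alpha, and the slice becomes (x^2 - 1) (a (x^2 - 1) + s alpha x).
   Choosing the sign s with s alpha > 0, the second factor is positive for x
   slightly below 1 while the first is negative, contradicting positivity. *)
From Stdlib Require Import Reals Lra Psatz.
Open Scope R_scope.

Lemma F1_slice (a alpha beta x s : R) : s^2 = 1 ->
  F1 a alpha beta x 1 1 s = a * (x^2 - 1)^2 + s * x * (alpha * x^2 + beta).
Proof.
  intros Hs; unfold F1, O41.
  replace (s^4) with ((s^2)^2) by ring; rewrite Hs; ring.
Qed.

Lemma sign_sq (s : R) : s = 1 \/ s = -1 -> s^2 = 1.
Proof. intros [-> | ->]; ring. Qed.

(* x := 2 / (2 + c) lies in (0, 1) and satisfies x^2 + c x > 1. *)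
Lemma exists_negative_slice_value (a c : R) : a <= 1 -> 0 < c ->
  exists x, a * (x^2 - 1)^2 + c * x * (x^2 - 1) < 0.
Proof.
  intros Ha Hc; exists (2 / (2 + c)).
  set (x := 2 / (2 + c)).
  assert (Hx : x * (2 + c) = 2) by (unfold x; field; lra).
  assert (Hx0 : 0 < x) by (unfold x; apply Rdiv_lt_0_compat; lra).
  assert (Hx1 : x < 1) by nra.
  assert (Hneg : x^2 - 1 < 0) by nra.
  assert (Hpos : x^2 - 1 + c * x > 0) by nra.
  assert (Hfactor : a * (x^2 - 1) + c * x > 0) by nra.
  replace (a * (x^2 - 1)^2 + c * x * (x^2 - 1))
    with ((x^2 - 1) * (a * (x^2 - 1) + c * x)) by ring.
  nra.
Qed.

Theorem lemma4 (a alpha beta : R) :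
  0 <= a <= 1 ->
  (forall x y z w : R, 0 <= F1 a alpha beta x y z w) ->
  alpha = 0 /\ beta = 0.
Proof.
  intros [_ Ha] Hpsd.
  assert (Hslice : forall s x, s = 1 \/ s = -1 ->
            0 <= a * (x^2 - 1)^2 + s * x * (alpha * x^2 + beta)).
  { intros s x Hs; rewrite <- F1_slice by (now apply sign_sq); apply Hpsd. }
  assert (Hbeta : beta = - alpha).
  { pose proof (Hslice 1 1 (or_introl eq_refl)).
    pose proof (Hslice (-1) 1 (or_intror eq_refl)); lra. }
  subst beta.
  assert (Halpha : alpha = 0).
  { destruct (Rtotal_order alpha 0) as [Hlt | [Heq | Hgt]]; [| exact Heq |];
      exfalso.
    - destruct (exists_negative_slice_value a (- alpha) Ha) as [x Hx]; [lra |].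
      pose proof (Hslice (-1) x (or_intror eq_refl)); nra.
    - destruct (exists_negative_slice_value a alpha Ha Hgt) as [x Hx].
      pose proof (Hslice 1 x (or_introl eq_refl)); nra. }
  split; lra.
Qed.
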